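(* Let $N=1$, assume (H-EL), (H-R), $e_*=+\infty$, and that $Q(s)\to-S\in(0,+\infty)$ and $sQ'(s)\to0$ as $s\to+\infty$. Let $(u_{0k})\subset\mathcal A$ with $u_{0k}\to+\infty$, let $u_k$ be the solution of $(P_{u_{0k}})$ with $\operatorname{supp}u_k=[-\bar r_k,\bar r_k]$. Then $\mu(u_{0k})\to+\infty$, $$u_{0k}^4\sim\tfrac{9|S|}{32}\mu(u_{0k})^2,\qquad \bar r_k^4\sim\tfrac{9}{8|S|}\mu(u_{0k})^2\quad(k\to\infty),$$ and $u_{0k}^{-1}u_k(\bar r_k y)\to1-y^2$ in $C^2_{loc}((-1,1))$.
   Context: Hypothesis (H-EL): $Q\in C^1((0,+\infty))$, $Q\equiv0$ on $(-\infty,0]$, $\inf Q>-\infty$, $Q(u)\sim Au^{1-m}$ as $u\to0^+$ with $A>0$, $1<m<3$, and $|sQ'(s)|\le CQ(s)$ for small $s>0$. $R(s)=Q(s)/s$. (H-R): $R'\ne0$ on $(0,\delta)\cup(\delta^{-1},\infty)$ for some $\delta\in(0,1)$. $e_*=+\infty$ means $R$ attains no minimum on $(0,\infty)$. $(P_{s})$: $-u''+Q'(u)=R(s)$ in $\{u>0\}$, $u(0)=s$, $u'(0)=0$. $\mathcal A=\{s>0: R'(s)<0,\ R(t)>R(s)\ \forall t\in(0,s)\}$; for $s\in\mathcal A$ the solution $u_s$ of $(P_s)$ is even with compact support $[-\bar r_s,\bar r_s]$, and $\mu(s)=2\int_0^{\bar r_s}u_s$ is its mass. *)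

From Stdlib Require Import Reals Lra.
From Coquelicot Require Import Coquelicot.
Open Scope R_scope.

Definition Rq (Q : R -> R) (s : R) : R := Q s / s.

Definition H_EL (Q : R -> R) (A m : R) : Prop :=
  (forall x, 0 < x -> ex_derive Q x /\ continuous (Derive Q) x) /\
  (forall x, x <= 0 -> Q x = 0) /\
  (exists M, forall x, M <= Q x) /\
  0 < A /\ 1 < m < 3 /\
  filterlim (fun u => Q u / (A * Rpower u (1 - m))) (at_right 0) (locally 1) /\
  (exists C d, 0 < d /\ forall s, 0 < s < d -> Rabs (s * Derive Q s) <= C * Q s).

Definition H_R (Q : R -> R) : Prop :=
  exists d, 0 < d < 1 /\
    forall s, (0 < s < d \/ / d < s) -> Derive (Rq Q) s <> 0.

(* e_* = +oo : R attains no minimum on (0,+oo) *)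
Definition estar_infinite (Q : R -> R) : Prop :=
  ~ (exists s0, 0 < s0 /\ forall s, 0 < s -> Rq Q s0 <= Rq Q s).

Definition setA (Q : R -> R) (s : R) : Prop :=
  0 < s /\ Derive (Rq Q) s < 0 /\ (forall t, 0 < t < s -> Rq Q t > Rq Q s).

Definition is_sol_P (Q : R -> R) (s : R) (u : R -> R) (rb : R) : Prop :=
  0 < rb /\
  (forall x, continuous u x) /\
  (forall x, -rb < x < rb ->
     0 < u x /\ ex_derive u x /\ ex_derive (Derive u) x /\
     - Derive_n u 2 x + Derive Q (u x) = Rq Q s) /\
  (forall x, rb <= Rabs x -> u x = 0) /\
  u 0 = s /\ Derive u 0 = 0.

Definition mass (u : R -> R) (rb : R) : R := 2 * RInt u 0 rb.

From Stdlib Require Import Reals Lra Psatz Classical.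
From Coquelicot Require Import Coquelicot.
Open Scope R_scope.

(* Write L = -S > 0, so that Q(t) -> L and t Q'(t) -> 0 as t -> +oo.  For s in 𝒜 the
   solution u of (P_s) satisfies the energy identity u'^2 = 2 (Q(u) - R(s) u), stays below s,
   and is strictly decreasing on (0, r); its reflection u(-x) solves (P_s) as well.  Q is
   bounded below by some q1 > 0 on (0, +oo).  Fix a relative error d.  For s large, the
   equation u'' = Q'(u) - Q(s)/s gives |u'' + L/s| <= d/s wherever u >= d s, and the energy
   gives |u'| >= sqrt q1 wherever u <= d s.  Integrating, u follows the parabola
   s - L x^2 / (2 s) up to O(d) (with its first two derivatives) until it reaches d s at
   time p s, and vanishes within a further d s / sqrt q1 (ParabolicProfile).  Hence r / s,
   RInt u / s^2 and the rescaled solution u(r y)/s are within O(d) of sqrt(2/L), (2/3)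
   sqrt(2/L) and 1 - y^2 in C^2; letting d -> 0 gives the limits, and the mass asymptotics
   follow by algebra. *)

Lemma locally_open_interval a b x : a < x < b -> locally x (fun y => a < y < b).
Proof.
  intros [Hax Hxb].
  assert (He : 0 < Rmin (x - a) (b - x)) by (apply Rmin_case; lra).
  exists (mkposreal _ He). intros y Hy.
  change (Rabs (y - x) < Rmin (x - a) (b - x)) in Hy.
  apply Rabs_def2 in Hy.
  pose proof (Rmin_l (x - a) (b - x)). pose proof (Rmin_r (x - a) (b - x)). lra.
Qed.

Lemma continuity_pt_ex_derive (f : R -> R) x : ex_derive f x -> continuity_pt f x.
Proof. intro H. apply continuity_pt_filterlim. apply (ex_derive_continuous f x H). Qed.

Lemma mvt_is_derive (h dh : R -> R) a b : a <= b ->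
  (forall x, a <= x <= b -> is_derive h x (dh x)) ->
  exists c, a <= c <= b /\ h b - h a = dh c * (b - a).
Proof.
  intros Hab Hd.
  destruct (MVT_gen h a b dh) as [c [Hc Heq]].
  - intros x Hx. rewrite Rmin_left, Rmax_right in Hx by lra. apply Hd; lra.
  - intros x Hx. rewrite Rmin_left, Rmax_right in Hx by lra.
    apply continuity_pt_ex_derive. exists (dh x). apply Hd; lra.
  - rewrite Rmin_left, Rmax_right in Hc by lra. exists c. auto.
Qed.

Lemma mvt_upper (h dh : R -> R) a b C : a <= b ->
  (forall x, a <= x <= b -> is_derive h x (dh x)) ->
  (forall x, a <= x <= b -> dh x <= C) -> h b - h a <= C * (b - a).
Proof.
  intros Hab Hd HC. destruct (mvt_is_derive h dh a b Hab Hd) as [c [Hc ->]].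
  apply Rmult_le_compat_r; [lra | auto].
Qed.

Lemma mvt_lower (h dh : R -> R) a b C : a <= b ->
  (forall x, a <= x <= b -> is_derive h x (dh x)) ->
  (forall x, a <= x <= b -> C <= dh x) -> C * (b - a) <= h b - h a.
Proof.
  intros Hab Hd HC. destruct (mvt_is_derive h dh a b Hab Hd) as [c [Hc ->]].
  apply Rmult_le_compat_r; [lra | auto].
Qed.

Lemma nonincreasing_on (u : R -> R) a b : a <= b ->
  (forall x, a <= x <= b -> ex_derive u x) ->
  (forall x, a <= x <= b -> Derive u x <= 0) -> u b <= u a.
Proof.
  intros Hab Hd Hneg.
  assert (u b - u a <= 0 * (b - a)); [|lra].
  apply (mvt_upper u (Derive u)); auto.
  intros x Hx. apply Derive_correct, Hd, Hx.
Qed.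

Lemma decreasing_on (u : R -> R) a b : a < b ->
  (forall x, a <= x <= b -> ex_derive u x) ->
  (forall x, a <= x <= b -> Derive u x < 0) -> u b < u a.
Proof.
  intros Hab Hd Hneg.
  destruct (mvt_is_derive u (Derive u) a b) as [c [Hc Heq]]; [lra| |].
  - intros x Hx. apply Derive_correct, Hd, Hx.
  - assert (Derive u c < 0) by (apply Hneg; lra). nra.
Qed.

Lemma decrease_right_of (f : R -> R) x l : is_derive f x l -> l < 0 ->
  exists e, 0 < e /\ forall t, x < t < x + e -> f t < f x.
Proof.
  intros H Hl. apply is_derive_Reals in H.
  destruct (H (- l / 2) ltac:(lra)) as [d Hd].
  exists d. split; [apply cond_pos|]. intros t Ht.
  assert (Hh : t - x <> 0) by lra.
  assert (Ha : Rabs (t - x) < d) by (rewrite Rabs_pos_eq; lra).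
  specialize (Hd _ Hh Ha). replace (x + (t - x)) with t in Hd by ring.
  apply Rabs_def2 in Hd.
  assert (Hq : (f t - f x) / (t - x) < 0) by lra.
  destruct (Rlt_or_le (f t) (f x)) as [? | Hc]; auto. exfalso.
  assert (0 <= (f t - f x) / (t - x)).
  { apply Rmult_le_pos; [lra | left; apply Rinv_0_lt_compat; lra]. }
  lra.
Qed.

Lemma first_hit (f : R -> R) a b c : a < b ->
  (forall x, a <= x <= b -> continuity_pt f x) -> f a < c -> c <= f b ->
  exists y, a < y <= b /\ f y = c /\ forall z, a <= z < y -> f z < c.
Proof.
  intros Hab Hc Ha Hb.
  set (E := fun x => a <= x <= b /\ forall z, a <= z <= x -> f z < c).
  assert (HEa : E a) by (split; [lra | intros z Hz; replace z with a by lra; auto]).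
  destruct (completeness E) as [y [Hub Hlub]].
  { exists b. intros x [Hx _]. lra. }
  { exists a. exact HEa. }
  assert (Hay : a <= y) by (apply Hub, HEa).
  assert (Hyb : y <= b) by (apply Hlub; intros x [Hx _]; lra).
  assert (Hbelow : forall z, a <= z < y -> f z < c).
  { intros z Hz. destruct (classic (exists x, E x /\ z <= x)) as [[x [Ex Hzx]] | Hn].
    - apply (proj2 Ex). lra.
    - exfalso. assert (y <= z); [|lra].
      apply Hlub. intros x Ex. destruct (Rle_or_lt x z); auto.
      exfalso. apply Hn. exists x. split; auto; lra. }
  assert (Hcy := proj1 (continuity_pt_locally f y) (Hc y (conj Hay Hyb))).
  assert (Hfy : f y = c).
  { destruct (Rtotal_order (f y) c) as [Hlt | [Heq | Hgt]]; auto; exfalso.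
    - (* f stays below c a little beyond y, contradicting the supremum *)
      assert (Hyb' : y < b) by (destruct (Req_dec y b); [subst; lra | lra]).
      destruct (Hcy (mkposreal (c - f y) ltac:(lra))) as [d Hd].
      set (y' := Rmin (y + d / 2) b).
      assert (Hy' : y < y' <= y + d / 2 /\ y' <= b).
      { unfold y'. pose proof (Rmin_l (y + d / 2) b). pose proof (Rmin_r (y + d / 2) b).
        pose proof (cond_pos d). split; [split|]; try lra. apply Rmin_case; lra. }
      assert (E y').
      { split; [lra|]. intros z Hz. destruct (Rlt_or_le z y); [apply Hbelow; lra|].
        assert (Hzd : Rabs (z - y) < d) by (rewrite Rabs_pos_eq; lra).
        specialize (Hd z Hzd). simpl in Hd. apply Rabs_def2 in Hd. lra. }
      specialize (Hub y' H). lra.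
    - (* f exceeds c just before y, contradicting the choice of y *)
      assert (Hay' : a < y) by (destruct (Req_dec a y); [subst; lra | lra]).
      destruct (Hcy (mkposreal (f y - c) ltac:(lra))) as [d Hd].
      set (z := Rmax (y - d / 2) a).
      assert (Hz : a <= z < y /\ y - d / 2 <= z).
      { unfold z. pose proof (Rmax_l (y - d / 2) a). pose proof (Rmax_r (y - d / 2) a).
        pose proof (cond_pos d). split; [split|]; try lra. apply Rmax_case; lra. }
      specialize (Hbelow z (proj1 Hz)).
      assert (Hzd : Rabs (z - y) < d) by (rewrite Rabs_left; pose proof (cond_pos d); lra).
      specialize (Hd z Hzd). simpl in Hd. apply Rabs_def2 in Hd. lra. }
  exists y. repeat split; auto. destruct (Req_dec a y); [subst; lra | lra].
Qed.

Lemma sol_ode (Q : R -> R) s (u : R -> R) r : is_sol_P Q s u r ->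
  forall x, -r < x < r ->
  0 < u x /\ ex_derive u x /\ ex_derive (Derive u) x /\
  Derive (Derive u) x = Derive Q (u x) - Q s / s.
Proof.
  intros [_ [_ [Hode _]]] x Hx. destruct (Hode x Hx) as [H1 [H2 [H3 H4]]].
  change (Derive_n u 2 x) with (Derive (Derive u) x) in H4. unfold Rq in H4.
  repeat split; auto. lra.
Qed.

Lemma sol_continuous (Q : R -> R) s (u : R -> R) r :
  is_sol_P Q s u r -> forall x, continuity_pt u x.
Proof. intros [_ [Hc _]] x. apply continuity_pt_filterlim, Hc. Qed.

Lemma reflect_derivatives (u : R -> R) r x :
  (forall y, -r < y < r -> ex_derive u y /\ ex_derive (Derive u) y) -> -r < x < r ->
  ex_derive (fun y => u (- y)) x /\ ex_derive (Derive (fun y => u (- y))) x /\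
  Derive (fun y => u (- y)) x = - Derive u (- x) /\
  Derive (Derive (fun y => u (- y))) x = Derive (Derive u) (- x).
Proof.
  intros Hd Hx.
  assert (Hloc : forall n, (n <= 2)%nat ->
    locally (- x) (fun y => forall k, (k <= n)%nat -> ex_derive_n u k y)).
  { intros n Hn. apply filter_imp with (2 := locally_open_interval (-r) r (-x) ltac:(lra)).
    intros y Hy k Hk. destruct (Hd y Hy) as [H1 H2].
    destruct k as [|[|[|k]]]; simpl; auto; lia. }
  pose proof (ex_derive_n_comp_opp u 1 x (Hloc 1%nat ltac:(lia))) as E1.
  pose proof (ex_derive_n_comp_opp u 2 x (Hloc 2%nat ltac:(lia))) as E2.
  pose proof (Derive_n_comp_opp u 1 x (Hloc 1%nat ltac:(lia))) as D1.
  pose proof (Derive_n_comp_opp u 2 x (Hloc 2%nat ltac:(lia))) as D2.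
  change (ex_derive (fun y => u (- y)) x) in E1.
  change (ex_derive (Derive (fun y => u (- y))) x) in E2.
  change (Derive (fun y => u (- y)) x = (-1) ^ 1 * Derive u (- x)) in D1.
  change (Derive (Derive (fun y => u (- y))) x = (-1) ^ 2 * Derive (Derive u) (- x)) in D2.
  repeat split; auto; [rewrite D1 | rewrite D2]; ring.
Qed.

Lemma sol_reflect (Q : R -> R) s (u : R -> R) r :
  is_sol_P Q s u r -> is_sol_P Q s (fun y => u (- y)) r.
Proof.
  intros Hsol. pose proof (sol_continuous _ _ _ _ Hsol) as Hcu.
  destruct Hsol as [Hr [Hc [Hode [Hout [H0 Hd0]]]]].
  assert (Hd : forall y, -r < y < r -> ex_derive u y /\ ex_derive (Derive u) y)
    by (intros y Hy; destruct (Hode y Hy) as [_ [? [? _]]]; auto).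
  split; [auto | split; [| split; [| split; [| split]]]].
  - intros x. apply continuity_pt_filterlim.
    apply continuity_pt_comp; [apply continuity_pt_opp, continuity_pt_id | apply Hcu].
  - intros x Hx. destruct (reflect_derivatives u r x Hd Hx) as [E1 [E2 [D1 D2]]].
    destruct (Hode (- x) ltac:(lra)) as [Hp [_ [_ Heq]]].
    repeat split; auto.
    change (Derive_n (fun y => u (- y)) 2 x) with (Derive (Derive (fun y => u (- y))) x).
    rewrite D2. exact Heq.
  - intros x Hx. apply Hout. rewrite Rabs_Ropp. auto.
  - simpl. rewrite Ropp_0. auto.
  - destruct (reflect_derivatives u r 0 Hd ltac:(lra)) as [_ [_ [D1 _]]].
    rewrite D1, Ropp_0, Hd0. ring.
Qed.

(* Conservation of energy: u'^2/2 - Q(u) + R(s) u is constant, and vanishes at x = 0. *)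
Lemma energy_identity (Q : R -> R) s (u : R -> R) r :
  (forall x, 0 < x -> ex_derive Q x) -> 0 < s -> is_sol_P Q s u r ->
  forall x, -r < x < r -> (Derive u x) ^ 2 = 2 * (Q (u x) - Q s / s * u x).
Proof.
  intros HQd Hs Hsol.
  pose proof (sol_ode _ _ _ _ Hsol) as Hode.
  destruct Hsol as [_ [_ [_ [_ [H0 Hd0]]]]].
  set (E := fun x => Derive u x ^ 2 / 2 - Q (u x) + Q s / s * u x).
  assert (HdE : forall y, -r < y < r -> is_derive E y 0).
  { intros y Hy. destruct (Hode y Hy) as [Hp [Hdu [Hddu Heq]]].
    assert (HQy : ex_derive Q (u y)) by (apply HQd; auto).
    replace 0 with (Derive u y * Derive (Derive u) y - Derive Q (u y) * Derive u y
                    + Q s / s * Derive u y) by (rewrite Heq; ring).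
    unfold E. auto_derive; [tauto|].
    set (a := Derive (fun x => Derive u x) y). set (b := Derive (fun x => u x) y).
    set (c := Derive (fun x => Q x) (u y)). change (Derive u y) with b.
    change (Derive Q (u y)) with c. change (Derive (Derive u) y) with a. field. lra. }
  assert (HE0 : E 0 = 0) by (unfold E; rewrite Hd0, H0; field; lra).
  intros x Hx. assert (E x = 0); [|unfold E in *; lra].
  destruct (Rle_or_lt 0 x) as [Hx0 | Hx0].
  - assert (Hd : forall y, 0 <= y <= x -> is_derive E y 0) by (intros y Hy; apply HdE; lra).
    destruct (mvt_is_derive E (fun _ => 0) 0 x Hx0 Hd) as [c [_ Hc]]. lra.
  - assert (Hd : forall y, x <= y <= 0 -> is_derive E y 0) by (intros y Hy; apply HdE; lra).
    destruct (mvt_is_derive E (fun _ => 0) x 0 ltac:(lra) Hd) as [c [_ Hc]]. lra.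
Qed.

Lemma Rq_is_derive (Q : R -> R) s : 0 < s -> ex_derive Q s ->
  is_derive (Rq Q) s ((Derive Q s * s - Q s) / s ^ 2).
Proof.
  intros Hs HQ. unfold Rq. auto_derive; [split; [auto | split; [lra | auto]] |].
  set (c := Derive (fun x => Q x) s). change (Derive Q s) with c. field. lra.
Qed.

(* For s in 𝒜, Q(v) - R(s) v = v (R(v) - R(s)) is positive for 0 < v < s. *)
Lemma setA_potential_pos (Q : R -> R) s v : setA Q s -> 0 < v < s ->
  0 < Q v - Q s / s * v.
Proof.
  intros [_ [_ HRlt]] Hv. specialize (HRlt v Hv). unfold Rq in HRlt.
  replace (Q v - Q s / s * v) with (v * (Q v / v - Q s / s)) by (field; lra).
  apply Rmult_lt_0_compat; lra.
Qed.

(* For s in 𝒜, the solution of (P_s) never exceeds its initial value s: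
   just above s, R < R(s) and the energy would become negative. *)
Lemma sol_le_initial (Q : R -> R) s (u : R -> R) r :
  (forall x, 0 < x -> ex_derive Q x) -> setA Q s -> is_sol_P Q s u r ->
  forall x, -r < x < r -> u x <= s.
Proof.
  intros HQd HA Hsol x2 Hx2.
  pose proof (energy_identity Q s u r HQd (proj1 HA) Hsol) as HE.
  pose proof (sol_continuous _ _ _ _ Hsol) as Hcu.
  destruct HA as [Hs [HR' _]]. destruct Hsol as [_ [_ [_ [_ [H0 _]]]]].
  destruct (Rle_or_lt (u x2) s) as [? | Hgt]; auto. exfalso.
  pose proof (Rq_is_derive Q s Hs (HQd s Hs)) as HRd.
  rewrite (is_derive_unique _ _ _ HRd) in HR'.
  destruct (decrease_right_of _ _ _ HRd HR') as [e [He Hdec]].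
  set (t0 := s + Rmin e (u x2 - s) / 2).
  assert (Ht0 : s < t0 < s + e /\ t0 < u x2).
  { unfold t0. pose proof (Rmin_l e (u x2 - s)). pose proof (Rmin_r e (u x2 - s)).
    assert (0 < Rmin e (u x2 - s)) by (apply Rmin_case; lra). lra. }
  destruct (IVT_gen u 0 x2 t0) as [x3 [Hx3 Hux3]].
  { intros x; apply Hcu. }
  { rewrite H0, Rmin_left, Rmax_right by lra. lra. }
  assert (Hx3' : -r < x3 < r).
  { destruct (Rle_or_lt 0 x2).
    - rewrite Rmin_left, Rmax_right in Hx3 by lra. lra.
    - rewrite Rmin_right, Rmax_left in Hx3 by lra. lra. }
  pose proof (HE x3 Hx3') as Hen. rewrite Hux3 in Hen.
  assert (Hrt : Rq Q t0 < Rq Q s) by (apply Hdec; lra).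
  unfold Rq in Hrt.
  assert (Q t0 - Q s / s * t0 < 0).
  { replace (Q t0 - Q s / s * t0) with (t0 * (Q t0 / t0 - Q s / s)) by (field; lra). nra. }
  pose proof (pow2_ge_0 (Derive u x3)). lra.
Qed.

(* For s in 𝒜 the solution is strictly decreasing on (0, r): it starts decreasing since
   u''(0) = s R'(s) < 0, and at a first critical point y > 0 the energy would force
   R(u(y)) = R(s), i.e. u(y) = s, although u has already dropped below s. *)
Lemma sol_decreasing (Q : R -> R) s (u : R -> R) r :
  (forall x, 0 < x -> ex_derive Q x) -> setA Q s -> is_sol_P Q s u r ->
  forall x, 0 < x < r -> Derive u x < 0.
Proof.
  intros HQd HA Hsol x Hx.
  pose proof (energy_identity Q s u r HQd (proj1 HA) Hsol) as HE.
  pose proof (sol_le_initial Q s u r HQd HA Hsol) as HLe.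
  pose proof (sol_ode _ _ _ _ Hsol) as Hode.
  assert (Hpot := fun v => setA_potential_pos Q s v HA).
  destruct HA as [Hs [HR' _]]. destruct Hsol as [Hr [_ [_ [_ [H0 Hd0]]]]].
  destruct (Hode 0 ltac:(lra)) as [_ [_ [Hdd0 Heq0]]]. rewrite H0 in Heq0.
  assert (Hu''0 : Derive (Derive u) 0 < 0).
  { pose proof (Rq_is_derive Q s Hs (HQd s Hs)) as HRd.
    rewrite (is_derive_unique _ _ _ HRd) in HR'.
    rewrite Heq0. replace (Derive Q s - Q s / s) with (s * ((Derive Q s * s - Q s) / s ^ 2))
      by (field; lra). nra. }
  destruct (decrease_right_of _ _ _ (Derive_correct _ _ Hdd0) Hu''0) as [e [He Hdec]].
  rewrite Hd0, Rplus_0_l in Hdec.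
  destruct (Rlt_or_le x e) as [Hxe | Hxe]; [apply Hdec; lra|].
  set (rho := Rmin e r / 2).
  assert (Hrho : 0 < rho < e /\ rho < r).
  { unfold rho. pose proof (Rmin_l e r). pose proof (Rmin_r e r).
    assert (0 < Rmin e r) by (apply Rmin_case; lra). lra. }
  destruct (Rlt_or_le (Derive u x) 0) as [? | Hge]; auto. exfalso.
  destruct (first_hit (Derive u) rho x 0) as [y [Hy [Hy0 Hybel]]]; try lra.
  - intros z Hz. apply continuity_pt_ex_derive, Hode; lra.
  - apply Hdec; lra.
  - assert (Hyr : -r < y < r) by lra.
    destruct (Hode y Hyr) as [Hpos _].
    assert (Huy : u y = s).
    { destruct (Rle_lt_or_eq_dec _ _ (HLe y Hyr)) as [Hlt |]; auto. exfalso.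
      pose proof (HE y Hyr) as Hen. rewrite Hy0 in Hen.
      specialize (Hpot (u y) (conj Hpos Hlt)). lra. }
    assert (H1 : u rho < u (rho / 2)).
    { apply decreasing_on; [lra | intros z Hz; apply Hode; lra | intros z Hz; apply Hdec; lra]. }
    assert (H2 : u (rho / 2) <= s) by (apply HLe; lra).
    assert (H3 : u y <= u rho).
    { apply nonincreasing_on; [lra | intros z Hz; apply Hode; lra |].
      intros z Hz. destruct (Req_dec z y) as [-> | Hne]; [lra | left; apply Hybel; lra]. }
    lra.
Qed.

Lemma taylor2_bounds (f : R -> R) x1 a b :
  Derive f 0 = 0 ->
  (forall x, 0 <= x <= x1 -> ex_derive f x /\ ex_derive (Derive f) x) ->
  (forall x, 0 <= x <= x1 -> a <= Derive (Derive f) x <= b) ->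
  forall x, 0 <= x <= x1 ->
    (a * x <= Derive f x <= b * x) /\ f 0 + a * x ^ 2 / 2 <= f x <= f 0 + b * x ^ 2 / 2.
Proof.
  intros Hf0 Hd Hab.
  (* auto_derive writes derivatives of f with eta-expanded arguments; fold them for ring *)
  assert (Hlin : forall k z, 0 <= z <= x1 ->
    is_derive (fun t => Derive f t - k * t) z (Derive (Derive f) z - k)).
  { intros k z Hz. destruct (Hd z Hz) as [_ H2]. auto_derive; [exact H2 |].
    change (Derive (fun t => Derive f t) z) with (Derive (Derive f) z). ring. }
  assert (Hquad : forall k z, 0 <= z <= x1 ->
    is_derive (fun t => f t - k * t ^ 2 / 2) z (Derive f z - k * z)).
  { intros k z Hz. destruct (Hd z Hz) as [H1 _]. auto_derive; [exact H1 |].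
    change (Derive (fun t => f t) z) with (Derive f z). field. }
  assert (Hd1 : forall x, 0 <= x <= x1 -> a * x <= Derive f x <= b * x).
  { intros x Hx. split.
    - assert (0 * (x - 0) <= (Derive f x - a * x) - (Derive f 0 - a * 0)); [|lra].
      apply (mvt_lower (fun t => Derive f t - a * t) (fun t => Derive (Derive f) t - a));
        [lra | intros z Hz; apply Hlin; lra |].
      intros z Hz. pose proof (Hab z ltac:(lra)). lra.
    - assert ((Derive f x - b * x) - (Derive f 0 - b * 0) <= 0 * (x - 0)); [|lra].
      apply (mvt_upper (fun t => Derive f t - b * t) (fun t => Derive (Derive f) t - b));
        [lra | intros z Hz; apply Hlin; lra |].
      intros z Hz. pose proof (Hab z ltac:(lra)). lra. }
  intros x Hx. split; [exact (Hd1 x Hx) | split].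
  - assert (0 * (x - 0) <= (f x - a * x ^ 2 / 2) - (f 0 - a * 0 ^ 2 / 2)); [|lra].
    apply (mvt_lower (fun t => f t - a * t ^ 2 / 2) (fun t => Derive f t - a * t));
      [lra | intros z Hz; apply Hquad; lra |].
    intros z Hz. pose proof (Hd1 z ltac:(lra)). lra.
  - assert ((f x - b * x ^ 2 / 2) - (f 0 - b * 0 ^ 2 / 2) <= 0 * (x - 0)); [|lra].
    apply (mvt_upper (fun t => f t - b * t ^ 2 / 2) (fun t => Derive f t - b * t));
      [lra | intros z Hz; apply Hquad; lra |].
    intros z Hz. pose proof (Hd1 z ltac:(lra)). lra.
Qed.

Lemma RInt_parabola s k b : RInt (fun x => s - k * x ^ 2) 0 b = s * b - k * b ^ 3 / 3.
Proof.
  apply is_RInt_unique.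
  replace (s * b - k * b ^ 3 / 3) with
    (minus ((fun x => s * x - k * x ^ 3 / 3) b) ((fun x => s * x - k * x ^ 3 / 3) 0))
    by (unfold minus, plus, opp; simpl; field).
  apply (is_RInt_derive (fun x => s * x - k * x ^ 3 / 3) (fun x => s - k * x ^ 2)).
  - intros x _. auto_derive; [auto | field].
  - intros x _. apply continuity_pt_filterlim, continuity_pt_ex_derive. auto_derive. auto.
Qed.

Lemma ex_RInt_continuous_R (u : R -> R) a b : (forall x, continuity_pt u x) -> ex_RInt u a b.
Proof.
  intros Hc. apply (ex_RInt_continuous (V := R_CompleteNormedModule)).
  intros z _. apply continuity_pt_filterlim, Hc.
Qed.

Lemma integral_bounds (u : R -> R) s r x1 kl ku h :
  (forall x, continuity_pt u x) -> 0 <= x1 <= r ->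
  (forall x, 0 <= x <= x1 -> s - ku * x ^ 2 <= u x <= s - kl * x ^ 2) ->
  (forall x, x1 <= x <= r -> 0 <= u x <= h) ->
  s * x1 - ku * x1 ^ 3 / 3 <= RInt u 0 r <= s * x1 - kl * x1 ^ 3 / 3 + (r - x1) * h.
Proof.
  intros Hc Hx1 Hpar Htail.
  assert (Hex : forall f a b, (forall x, continuity_pt f x) -> ex_RInt f a b)
    by (intros; apply ex_RInt_continuous_R; auto).
  assert (Hexq : forall k, forall x, continuity_pt (fun x => s - k * x ^ 2) x)
    by (intros k x; apply continuity_pt_ex_derive; auto_derive; auto).
  rewrite <- (RInt_Chasles u 0 x1 r) by auto.
  assert (I1 : RInt u 0 x1 <= s * x1 - kl * x1 ^ 3 / 3).
  { rewrite <- RInt_parabola. apply RInt_le; auto; [lra |]. intros x Hx. apply Hpar; lra. }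
  assert (I2 : s * x1 - ku * x1 ^ 3 / 3 <= RInt u 0 x1).
  { rewrite <- RInt_parabola. apply RInt_le; auto; [lra |]. intros x Hx. apply Hpar; lra. }
  assert (I3 : 0 <= RInt u x1 r).
  { apply RInt_ge_0; auto; [lra |]. intros x Hx. apply Htail; lra. }
  assert (I4 : RInt u x1 r <= (r - x1) * h).
  { replace ((r - x1) * h) with (RInt (fun _ => h) x1 r) by (rewrite RInt_const; reflexivity).
    apply RInt_le; auto; [lra | apply ex_RInt_const |]. intros x Hx. apply Htail; lra. }
  change (plus (RInt u 0 x1) (RInt u x1 r)) with (RInt u 0 x1 + RInt u x1 r). lra.
Qed.

Lemma exit_time_bound (u : R -> R) x1 r h c : 0 < c -> 0 <= h -> u x1 = h ->
  (forall x, x1 <= x < r -> 0 < u x /\ ex_derive u x) ->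
  (forall x, x1 <= x < r -> Derive u x <= - c) ->
  r - x1 <= h / c.
Proof.
  intros Hc Hh0 Hh Hpos Hspeed.
  destruct (Rle_or_lt (r - x1) (h / c)) as [? | Hgt]; auto. exfalso.
  set (x := x1 + h / c).
  assert (Hx : x1 <= x < r)
    by (assert (0 <= h / c) by (apply Rmult_le_pos; [lra | left; apply Rinv_0_lt_compat; lra]);
        unfold x; lra).
  assert (Hm : u x - u x1 <= - c * (x - x1)).
  { apply (mvt_upper u (Derive u)); [lra | |].
    - intros z Hz. apply Derive_correct, Hpos. lra.
    - intros z Hz. apply Hspeed. lra. }
  replace (- c * (x - x1)) with (- h) in Hm by (unfold x; field; lra).
  pose proof (proj1 (Hpos x Hx)). lra.
Qed.

(* The quantitative picture of a solution u of height s and support radius r, with relative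
   error d: up to the time p s at which u = d s, u lies within O(d) of the parabola
   s - L x^2 / (2 s) (with its first and second derivatives), and u then vanishes within
   d s / c; consequently p and the mass ratio RInt u / s^2 are pinned down up to O(d). *)
Definition ParabolicProfile (u : R -> R) s r L d c : Prop :=
  exists p, 0 < p /\ p * s < r /\ r <= p * s + d * s / c /\
    (L - d) * p ^ 2 <= 2 * (1 - d) <= (L + d) * p ^ 2 /\
    p - (L + d) * p ^ 3 / 6 <= RInt u 0 r / s ^ 2 <= p - (L - d) * p ^ 3 / 6 + d ^ 2 / c /\
    forall x, 0 <= x <= p * s ->
      s - (L + d) / s * x ^ 2 / 2 <= u x <= s - (L - d) / s * x ^ 2 / 2 /\
      - ((L + d) / s * x) <= Derive u x <= - ((L - d) / s * x) /\
      Rabs (Derive (Derive u) x + L / s) <= d / s.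

Lemma profile_of_estimates (u : R -> R) s r L d c :
  0 < s -> 0 < r -> 0 < d < 1 -> 0 < c ->
  (forall x, continuity_pt u x) -> u r = 0 -> u 0 = s -> Derive u 0 = 0 ->
  (forall x, 0 <= x < r -> 0 < u x /\ ex_derive u x /\ ex_derive (Derive u) x) ->
  (forall x, 0 < x < r -> Derive u x < 0) ->
  (forall x, 0 <= x < r -> d * s <= u x -> Rabs (Derive (Derive u) x + L / s) <= d / s) ->
  (forall x, 0 <= x < r -> u x <= d * s -> c <= Rabs (Derive u x)) ->
  ParabolicProfile u s r L d c.
Proof.
  intros Hs Hr Hd Hc Hcu Hur Hu0 Hd0 Hder Hneg Hcurv Hspeed.
  destruct (IVT_gen u 0 r (d * s)) as [x1 [Hx1 Hux1]].
  { intros x; apply Hcu. }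
  { rewrite Hu0, Hur, Rmin_right, Rmax_left by lra. nra. }
  rewrite Rmin_left, Rmax_right in Hx1 by lra.
  assert (Hx1r : 0 < x1 < r).
  { split; [destruct (Req_dec x1 0) as [-> |]; [rewrite Hu0 in Hux1; nra | lra]
           |destruct (Req_dec x1 r) as [-> |]; [rewrite Hur in Hux1; nra | lra]]. }
  assert (Hdle : forall x, 0 <= x < r -> Derive u x <= 0).
  { intros x Hx. destruct (Req_dec x 0) as [-> | ]; [lra | left; apply Hneg; lra]. }
  assert (Hmono : forall a b, 0 <= a <= b -> b <= r -> u b <= u a).
  { intros a b Hab Hbr. destruct (Req_dec b r) as [-> | Hne].
    - rewrite Hur. destruct (Req_dec a r) as [-> | ]; [lra | left; apply Hder; lra].
    - apply nonincreasing_on; [lra | intros z Hz; apply Hder; lra | intros z Hz; apply Hdle; lra]. }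
  assert (Hhigh : forall x, 0 <= x <= x1 -> d * s <= u x)
    by (intros x Hx; rewrite <- Hux1; apply Hmono; lra).
  assert (Hlow : forall x, x1 <= x <= r -> u x <= d * s)
    by (intros x Hx; rewrite <- Hux1; apply Hmono; lra).
  assert (Htaylor := taylor2_bounds u x1 (- ((L + d) / s)) (- ((L - d) / s)) Hd0
    (fun x Hx => proj2 (Hder x ltac:(lra)))).
  assert (Hpar : forall x, 0 <= x <= x1 ->
    (- ((L + d) / s) * x <= Derive u x <= - ((L - d) / s) * x) /\
    u 0 + - ((L + d) / s) * x ^ 2 / 2 <= u x <= u 0 + - ((L - d) / s) * x ^ 2 / 2).
  { apply Htaylor. intros x Hx.
    pose proof (Hcurv x ltac:(lra) (Hhigh x Hx)) as H. apply Rabs_le_between in H.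
    unfold Rdiv in *. lra. }
  rewrite Hu0 in Hpar.
  assert (Hexit : r - x1 <= d * s / c).
  { apply (exit_time_bound u x1 r (d * s) c); auto; [nra | |].
    - intros x Hx. split; apply Hder; lra.
    - intros x Hx. pose proof (Hspeed x ltac:(lra) (Hlow x ltac:(lra))) as H.
      rewrite Rabs_left1 in H by (apply Hdle; lra). lra. }
  assert (Hint := integral_bounds u s r x1 ((L - d) / s / 2) ((L + d) / s / 2) (d * s) Hcu
    ltac:(lra)).
  assert (Hmass := integral_bounds u s r x1 ((L - d) / s / 2) ((L + d) / s / 2) (d * s) Hcu
    ltac:(lra)).
  destruct Hmass as [M1 M2].
  { intros x Hx. destruct (Hpar x Hx) as [_ H]. unfold Rdiv in *. lra. }
  { intros x Hx. split; [| apply Hlow; lra].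
    destruct (Req_dec x r) as [-> | ]; [lra | left; apply Hder; lra]. }
  set (p := x1 / s).
  assert (Hx1p : x1 = p * s) by (unfold p; field; lra).
  assert (Hp : 0 < p) by (unfold p; apply Rdiv_lt_0_compat; lra).
  rewrite Hx1p in Hpar, Hexit, M1, M2, Hux1.
  exists p. split; [exact Hp |]. split; [lra |]. split; [lra |]. split.
  { (* evaluate the Taylor bounds at x1 = p s, where u = d s *)
    destruct (Hpar (p * s) ltac:(lra)) as [_ [A1 A2]]. rewrite Hux1 in A1, A2.
    assert (E : forall k, s + - (k / s) * (p * s) ^ 2 / 2 = s * (1 - k * p ^ 2 / 2))
      by (intros; field; lra).
    rewrite E in A1, A2. split; nra. }
  split.
  { (* divide the mass bounds by s^2; the tail contributes at most (d s / c) (d s) *)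
    assert (Htail : (r - p * s) * (d * s) <= d ^ 2 / c * s ^ 2).
    { replace (d ^ 2 / c * s ^ 2) with (d * s / c * (d * s)) by (field; lra).
      apply Rmult_le_compat_r; nra. }
    assert (Hs2' : 0 < s ^ 2) by (apply pow_lt, Hs).
    assert (HI : RInt u 0 r = RInt u 0 r / s ^ 2 * s ^ 2)
      by (unfold Rdiv; rewrite Rmult_assoc, Rinv_l; lra).
    split; apply (Rmult_le_reg_r (s ^ 2)); auto; rewrite <- HI.
    - replace ((p - (L + d) * p ^ 3 / 6) * s ^ 2)
        with (s * (p * s) - (L + d) / s / 2 * (p * s) ^ 3 / 3) by (field; lra). lra.
    - replace ((p - (L - d) * p ^ 3 / 6 + d ^ 2 / c) * s ^ 2)
        with (s * (p * s) - (L - d) / s / 2 * (p * s) ^ 3 / 3 + d ^ 2 / c * s ^ 2)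
        by (field; lra). lra. }
  intros x Hx. destruct (Hpar x Hx) as [D1 U1].
  split; [unfold Rdiv in *; lra | split; [unfold Rdiv in *; lra |]].
  destruct (Req_dec x 0) as [-> |];
    [apply Hcurv; [lra | rewrite Hu0; nra] | apply Hcurv; [lra | apply Hhigh; lra]].
Qed.

Lemma curvature_error L Qs s v q d : 0 < s -> 0 < d < 1 -> d * s <= v ->
  Rabs (v * q) <= d ^ 2 / 2 -> Rabs (Qs - L) <= d ^ 2 / 2 ->
  Rabs (q - Qs / s + L / s) <= d / s.
Proof.
  intros Hs Hd Hv Hvq HQs.
  assert (Hq : s * Rabs q <= d / 2).
  { rewrite Rabs_mult, (Rabs_pos_eq v) in Hvq by nra.
    assert (d * s * Rabs q <= v * Rabs q) by (apply Rmult_le_compat_r; [apply Rabs_pos | lra]).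
    assert (d * (s * Rabs q) <= d * (d / 2)) by nra. nra. }
  assert (Hsi : 0 < / s) by (apply Rinv_0_lt_compat, Hs).
  replace (q - Qs / s + L / s) with ((s * q - (Qs - L)) * / s) by (field; lra).
  unfold Rdiv. rewrite Rabs_mult, (Rabs_pos_eq (/ s)) by lra.
  apply Rmult_le_compat_r; [lra |].
  eapply Rle_trans; [apply Rabs_triang |].
  rewrite Rabs_Ropp, Rabs_mult, (Rabs_pos_eq s) by lra. nra.
Qed.

Lemma solution_profile (Q : R -> R) L q1 d s r (v : R -> R) :
  (forall x, 0 < x -> ex_derive Q x) -> 0 < q1 -> (forall t, 0 < t -> q1 <= Q t) ->
  0 < d < 1 -> (L + 1) * d <= q1 / 2 ->
  Rabs (Q s - L) <= d ^ 2 / 2 -> (forall t, d * s <= t -> Rabs (t * Derive Q t) <= d ^ 2 / 2) ->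
  is_sol_P Q s v r -> setA Q s ->
  ParabolicProfile v s r L d (sqrt q1).
Proof.
  intros HQd Hq1 Hq1b Hd Hdq HQs HQ' Hsol HA.
  assert (Hs : 0 < s) by apply HA.
  pose proof (energy_identity Q s v r HQd Hs Hsol) as HE.
  pose proof (sol_ode _ _ _ _ Hsol) as Hode.
  pose proof (sol_decreasing Q s v r HQd HA Hsol) as Hneg.
  pose proof (sol_continuous _ _ _ _ Hsol) as Hcu.
  destruct Hsol as [Hr [_ [_ [Hout [H0 Hd0]]]]].
  apply profile_of_estimates; auto.
  - apply sqrt_lt_R0, Hq1.
  - apply Hout. rewrite Rabs_pos_eq; lra.
  - intros x Hx. destruct (Hode x ltac:(lra)) as [? [? [? _]]]. auto.
  - intros x Hx Hvx. destruct (Hode x ltac:(lra)) as [Hp [_ [_ ->]]].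
    apply (curvature_error L (Q s) s (v x)); auto.
  - (* where v <= d s the energy gives v'^2 >= 2 (q1 - Q(s) d) >= q1 *)
    intros x Hx Hvx. destruct (Hode x ltac:(lra)) as [Hp _].
    assert (HQs0 : 0 < Q s) by (apply (Rlt_le_trans _ q1); auto).
    assert (Hlam : Q s / s * v x <= Q s * d).
    { replace (Q s / s * v x) with (Q s * (v x / s)) by (field; lra).
      apply Rmult_le_compat_l; [lra |].
      apply (Rmult_le_reg_r s); auto. replace (v x / s * s) with (v x) by (field; lra). lra. }
    assert (Hb : q1 <= Derive v x ^ 2).
    { rewrite (HE x ltac:(lra)). pose proof (Hq1b (v x) Hp).
      apply Rabs_le_between in HQs. assert (Q s * d <= (L + 1) * d) by nra. nra. }
    rewrite <- sqrt_Rsqr_abs. apply sqrt_le_1_alt. unfold Rsqr. simpl in Hb. lra.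
Qed.

Lemma lim_p_infty_eps (f : R -> R) (l : R) : is_lim f p_infty l ->
  forall eps, 0 < eps -> exists T, forall t, T < t -> Rabs (f t - l) < eps.
Proof.
  intros H eps He. apply is_lim_spec in H.
  destruct (H (mkposreal _ He)) as [T HT]. exists T. intros t Ht. apply HT, Ht.
Qed.

Lemma seq_eventually_large (u : nat -> R) : is_lim_seq u p_infty ->
  forall M, eventually (fun n => M < u n).
Proof. intros H. apply is_lim_seq_spec in H. exact H. Qed.

Lemma Q_large_near_zero (Q : R -> R) A m : H_EL Q A m ->
  exists d, 0 < d /\ forall y, 0 < y < d -> A / 2 <= Q y.
Proof.
  intros [_ [_ [_ [HA [Hm [Hlim _]]]]]].
  apply filterlim_locally with (eps := mkposreal (1 / 2) ltac:(lra)) in Hlim.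
  destruct Hlim as [d Hd].
  exists (Rmin d 1). split; [apply Rmin_case; [apply cond_pos | lra] |].
  intros y Hy. pose proof (Rmin_l d 1). pose proof (Rmin_r d 1).
  assert (Hb : ball 0 d y) by (change (Rabs (y - 0) < d); rewrite Rabs_pos_eq; lra).
  specialize (Hd y Hb ltac:(lra)). change (Rabs (Q y / (A * Rpower y (1 - m)) - 1) < 1 / 2) in Hd.
  apply Rabs_def2 in Hd.
  assert (Hp : 1 <= Rpower y (1 - m)).
  { unfold Rpower. pose proof (exp_ineq1_le ((1 - m) * ln y)).
    assert (ln y <= 0) by (rewrite <- ln_1; apply ln_le; lra). nra. }
  assert (HAp : 0 < A * Rpower y (1 - m)) by (apply Rmult_lt_0_compat; lra).
  replace (Q y) with (Q y / (A * Rpower y (1 - m)) * (A * Rpower y (1 - m))) by (field; lra).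
  nra.
Qed.

(* Q > 0 on (0, +oo): for t below a point s of 𝒜 with Q(s) > 0, R(t) > R(s) > 0. *)
Lemma Q_positive (Q : R -> R) L (u0 : nat -> R) : 0 < L -> is_lim Q p_infty L ->
  (forall k, setA Q (u0 k)) -> is_lim_seq u0 p_infty ->
  forall t, 0 < t -> 0 < Q t.
Proof.
  intros HL HQinf HA Hu0 t Ht.
  destruct (lim_p_infty_eps Q L HQinf (L / 2) ltac:(lra)) as [T HT].
  destruct (seq_eventually_large u0 Hu0 (Rmax t T)) as [N HN].
  specialize (HN N (le_n N)). pose proof (Rmax_l t T). pose proof (Rmax_r t T).
  destruct (HA N) as [Hs [_ HRlt]].
  assert (HQs : 0 < Q (u0 N)) by (specialize (HT (u0 N) ltac:(lra)); apply Rabs_def2 in HT; lra).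
  specialize (HRlt t ltac:(lra)). unfold Rq in HRlt.
  assert (0 < Q (u0 N) / u0 N) by (apply Rdiv_lt_0_compat; lra).
  replace (Q t) with (Q t / t * t) by (field; lra). nra.
Qed.

(* Q is bounded below by a positive constant on (0, +oo): near 0 by (H-EL), near +oo by
   its limit L > 0, and in between by continuity and positivity. *)
Lemma Q_lower_bound (Q : R -> R) A m L (u0 : nat -> R) :
  H_EL Q A m -> 0 < L -> is_lim Q p_infty L ->
  (forall k, setA Q (u0 k)) -> is_lim_seq u0 p_infty ->
  exists q1, 0 < q1 /\ forall t, 0 < t -> q1 <= Q t.
Proof.
  intros HEL HL HQinf HA Hu0.
  destruct (Q_large_near_zero Q A m HEL) as [d [Hd Hnear]].
  assert (HApos : 0 < A) by apply HEL.
  destruct (lim_p_infty_eps Q L HQinf (L / 2) ltac:(lra)) as [T HT].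
  set (T' := Rmax T d + 1).
  assert (HT' : T < T' /\ d < T') by (unfold T'; pose proof (Rmax_l T d); pose proof (Rmax_r T d); lra).
  assert (Hcont : forall c, d / 2 <= c <= T' -> continuity_pt Q c).
  { intros c Hc. apply continuity_pt_ex_derive, (proj1 HEL c). lra. }
  destruct (continuity_ab_min Q (d / 2) T' ltac:(lra) Hcont) as [mx [Hmx Hmx']].
  assert (Hmq : 0 < Q mx) by (apply (Q_positive Q L u0); auto; lra).
  exists (Rmin (A / 2) (Rmin (Q mx) (L / 2))).
  pose proof (Rmin_l (A / 2) (Rmin (Q mx) (L / 2))).
  pose proof (Rmin_r (A / 2) (Rmin (Q mx) (L / 2))).
  pose proof (Rmin_l (Q mx) (L / 2)). pose proof (Rmin_r (Q mx) (L / 2)).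
  split; [apply Rmin_case; [lra | apply Rmin_case; lra] |].
  intros t Ht.
  destruct (Rlt_or_le t d); [specialize (Hnear t ltac:(lra)); lra |].
  destruct (Rle_or_lt t T'); [specialize (Hmx t ltac:(lra)); lra |].
  specialize (HT t ltac:(lra)). apply Rabs_def2 in HT. lra.
Qed.

Lemma eventually_profile (Q : R -> R) (L q1 : R) (u0 : nat -> R) (u : nat -> R -> R) (rb : nat -> R) d :
  (forall x, 0 < x -> ex_derive Q x) ->
  is_lim Q p_infty L -> is_lim (fun s => s * Derive Q s) p_infty 0 ->
  (forall k, setA Q (u0 k)) -> is_lim_seq u0 p_infty ->
  (forall k, is_sol_P Q (u0 k) (u k) (rb k)) ->
  0 < q1 -> (forall t, 0 < t -> q1 <= Q t) -> 0 < d < 1 -> (L + 1) * d <= q1 / 2 ->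
  eventually (fun k =>
    ParabolicProfile (u k) (u0 k) (rb k) L d (sqrt q1) /\
    ParabolicProfile (fun y => u k (- y)) (u0 k) (rb k) L d (sqrt q1)).
Proof.
  intros HQd HQinf HQ' HA Hu0 Hu Hq1 Hq1b Hd Hdq.
  assert (He : 0 < d ^ 2 / 2) by nra.
  destruct (lim_p_infty_eps Q L HQinf _ He) as [T1 HT1].
  destruct (lim_p_infty_eps _ 0 HQ' _ He) as [T2 HT2].
  destruct (seq_eventually_large u0 Hu0 (Rmax T1 (T2 / d))) as [K HK].
  exists K. intros k Hk. specialize (HK k Hk).
  pose proof (Rmax_l T1 (T2 / d)). pose proof (Rmax_r T1 (T2 / d)).
  assert (H1 : Rabs (Q (u0 k) - L) <= d ^ 2 / 2) by (left; apply HT1; lra).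
  assert (H2 : forall t, d * u0 k <= t -> Rabs (t * Derive Q t) <= d ^ 2 / 2).
  { intros t Ht. left. rewrite <- (Rminus_0_r (t * Derive Q t)). apply HT2.
    assert (T2 < d * u0 k); [|lra].
    replace T2 with (d * (T2 / d)) by (field; lra). apply Rmult_lt_compat_l; lra. }
  split; apply (solution_profile Q L q1 d (u0 k) (rb k)); auto.
  apply sol_reflect, Hu.
Qed.

(* The limit of r / s: the time at which the parabola s - L x^2 / (2 s) vanishes, over s. *)
Definition radius_ratio (L : R) : R := sqrt (2 / L).

Lemma radius_ratio_pos L : 0 < L -> 0 < radius_ratio L.
Proof. intros HL. apply sqrt_lt_R0, Rdiv_lt_0_compat; lra. Qed.

Lemma radius_ratio_sq L : 0 < L -> radius_ratio L ^ 2 = 2 / L.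
Proof.
  intros HL. unfold radius_ratio. simpl. rewrite Rmult_1_r.
  apply sqrt_sqrt. left. apply Rdiv_lt_0_compat; lra.
Qed.

Lemma profile_time_close L d p : 0 < L -> 0 < d <= L / 2 -> 0 < p ->
  (L - d) * p ^ 2 <= 2 * (1 - d) <= (L + d) * p ^ 2 ->
  p ^ 2 <= 4 / L /\
  Rabs (p - radius_ratio L) <= d * ((4 / L + 2) / (L * radius_ratio L)).
Proof.
  intros HL Hd Hp [H1 H2].
  pose proof (radius_ratio_pos L HL) as Hz. pose proof (radius_ratio_sq L HL) as Hz2.
  set (z := radius_ratio L) in *.
  assert (Hp2 : p ^ 2 <= 4 / L).
  { apply (Rmult_le_reg_l L); auto. replace (L * (4 / L)) with 4 by (field; lra).
    assert (L / 2 * p ^ 2 <= (L - d) * p ^ 2) by (apply Rmult_le_compat_r; nra). lra. }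
  split; auto.
  (* |L p^2 - 2| <= d (p^2 + 2), hence |p^2 - z^2| = |p - z| (p + z) <= d (4/L + 2) / L *)
  assert (Hb : Rabs (L * p ^ 2 - 2) <= d * (4 / L + 2)).
  { apply Rabs_le. split; nra. }
  assert (Hb2 : Rabs (p - z) * (p + z) <= d * (4 / L + 2) / L).
  { assert (E : (p - z) * (p + z) = (L * p ^ 2 - 2) / L).
    { replace ((p - z) * (p + z)) with (p ^ 2 - z ^ 2) by ring. rewrite Hz2. field. lra. }
    rewrite <- (Rabs_pos_eq (p + z)) by lra. rewrite <- Rabs_mult, E.
    unfold Rdiv. rewrite Rabs_mult, (Rabs_pos_eq (/ L)) by (left; apply Rinv_0_lt_compat; lra).
    apply Rmult_le_compat_r; [left; apply Rinv_0_lt_compat; lra | auto]. }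
  apply (Rmult_le_reg_r z); auto.
  replace (d * ((4 / L + 2) / (L * z)) * z) with (d * (4 / L + 2) / L) by (field; lra).
  assert (Rabs (p - z) * z <= Rabs (p - z) * (p + z))
    by (apply Rmult_le_compat_l; [apply Rabs_pos | lra]).
  lra.
Qed.

(* r / s is within O(d) of sqrt(2/L): r lies between p s and p s + d s / c. *)
Lemma support_ratio_close v s r L d c : 0 < s -> 0 < L -> 0 < d <= L / 2 -> 0 < c ->
  ParabolicProfile v s r L d c ->
  Rabs (r / s - radius_ratio L) <= d * (1 / c + (4 / L + 2) / (L * radius_ratio L)).
Proof.
  intros Hs HL Hd Hc [p [Hp [Hps [Hr [Hpp _]]]]].
  destruct (profile_time_close L d p HL Hd Hp Hpp) as [_ Hpz].
  pose proof (radius_ratio_pos L HL).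
  assert (p < r / s) by (apply (Rmult_lt_reg_r s); auto; replace (r / s * s) with r by (field; lra); lra).
  assert (r / s <= p + d / c).
  { apply (Rmult_le_reg_r s); auto. replace (r / s * s) with r by (field; lra).
    replace ((p + d / c) * s) with (p * s + d * s / c) by (field; lra). auto. }
  replace (r / s - radius_ratio L) with ((r / s - p) + (p - radius_ratio L)) by ring.
  eapply Rle_trans; [apply Rabs_triang |].
  rewrite (Rabs_pos_eq (r / s - p)) by lra.
  replace (d * (1 / c + (4 / L + 2) / (L * radius_ratio L)))
    with (d / c + d * ((4 / L + 2) / (L * radius_ratio L))) by (field; lra).
  lra.
Qed.

(* RInt u 0 r / s^2 is within O(d) of p - L p^3 / 6, which is within O(d) of
   z - L z^3 / 6 = 2 z / 3 for z = sqrt(2/L). *)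
Lemma mass_ratio_close v s r L d c : 0 < L -> 0 < d <= L / 2 -> d <= 1 -> 0 < c ->
  ParabolicProfile v s r L d c ->
  Rabs (RInt v 0 r / s ^ 2 - 2 * radius_ratio L / 3) <=
    d * (((4 / L + 1) ^ 3 / 6 + 1 / c) +
         (4 / L + 2) / (L * radius_ratio L) * (1 + L * (4 / L + 1) ^ 2 / 2)).
Proof.
  intros HL Hd Hd1 Hc [p [Hp [_ [_ [Hpp [HM _]]]]]].
  destruct (profile_time_close L d p HL Hd Hp Hpp) as [Hp2 Hpz].
  pose proof (radius_ratio_pos L HL) as Hz. pose proof (radius_ratio_sq L HL) as Hz2.
  set (z := radius_ratio L) in *.
  set (K0 := (4 / L + 2) / (L * z)) in *.
  set (P := 4 / L + 1).
  set (M := RInt v 0 r / s ^ 2) in *.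
  assert (H4L : 0 < 4 / L) by (apply Rdiv_lt_0_compat; lra).
  assert (HpP : p <= P) by (unfold P; nra).
  assert (HzP : z <= P).
  { unfold P. assert (2 / L <= 4 / L)
      by (unfold Rdiv; apply Rmult_le_compat_r; [left; apply Rinv_0_lt_compat |]; lra).
    nra. }
  assert (A1 : Rabs (M - (p - L * p ^ 3 / 6)) <= d * (P ^ 3 / 6 + 1 / c)).
  { assert (d * p ^ 3 <= d * P ^ 3) by (apply Rmult_le_compat_l; [lra | apply pow_incr; lra]).
    assert (Hdc : d ^ 2 / c <= d * (1 / c)).
    { unfold Rdiv. rewrite Rmult_1_l. replace (d ^ 2 * / c) with (d * (d * / c)) by ring.
      apply Rmult_le_compat_l; [lra |]. assert (0 < / c) by (apply Rinv_0_lt_compat; lra). nra. }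
    assert (0 <= d * (1 / c)) by (apply Rmult_le_pos; [lra | left; apply Rdiv_lt_0_compat; lra]).
    assert (0 <= p ^ 3) by (apply pow_le; lra).
    apply Rabs_le. lra. }
  assert (A2 : Rabs ((p - L * p ^ 3 / 6) - 2 * z / 3) <= d * K0 * (1 + L * P ^ 2 / 2)).
  { replace (2 * z / 3) with (z - L * z ^ 3 / 6)
      by (replace (z ^ 3) with (z * z ^ 2) by ring; rewrite Hz2; field; lra).
    replace (p - L * p ^ 3 / 6 - (z - L * z ^ 3 / 6)) with
      ((p - z) * (1 - L * (p ^ 2 + p * z + z ^ 2) / 6)) by field.
    rewrite Rabs_mult. apply Rmult_le_compat; try apply Rabs_pos; auto.
    assert (p ^ 2 + p * z + z ^ 2 <= 3 * P ^ 2) by nra.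
    assert (0 <= p ^ 2 + p * z + z ^ 2) by nra.
    apply Rabs_le. split; nra. }
  replace (M - 2 * z / 3) with ((M - (p - L * p ^ 3 / 6)) + ((p - L * p ^ 3 / 6) - 2 * z / 3))
    by ring.
  eapply Rle_trans; [apply Rabs_triang |]. nra.
Qed.

Lemma profile_rescaled_bounds w s r L d c Y : 0 < s -> 0 < r ->
  ParabolicProfile w s r L d c -> 0 <= Y -> r * Y + d * s / c <= r ->
  (1 - (L + d) * (r / s) ^ 2 * Y ^ 2 / 2 <= w (r * Y) / s
     <= 1 - (L - d) * (r / s) ^ 2 * Y ^ 2 / 2) /\
  (- ((L + d) * (r / s) ^ 2 * Y) <= r / s * Derive w (r * Y)
     <= - ((L - d) * (r / s) ^ 2 * Y)) /\
  (- ((L + d) * (r / s) ^ 2) <= r ^ 2 * Derive (Derive w) (r * Y) / s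
     <= - ((L - d) * (r / s) ^ 2)).
Proof.
  intros Hs Hr [p [_ [_ [Hrp [_ [_ Hpt]]]]]] HY HrY.
  assert (Hx : 0 <= r * Y <= p * s) by (split; [nra | lra]).
  destruct (Hpt (r * Y) Hx) as [[A1 A2] [[B1 B2] C]].
  set (rho := r / s).
  assert (Hr' : r = rho * s) by (unfold rho; field; lra).
  assert (Hrho : 0 < rho) by (unfold rho; apply Rdiv_lt_0_compat; auto).
  assert (Hsi : 0 < / s) by (apply Rinv_0_lt_compat, Hs).
  rewrite Hr' in A1, A2, B1, B2, C |- *.
  apply Rabs_le_between in C.
  replace (rho * s * Y) with (s * (rho * Y)) in * by ring.
  set (x := Derive (Derive w) (s * (rho * Y))) in *.
  repeat split.
  - replace (1 - (L + d) * rho ^ 2 * Y ^ 2 / 2)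
      with ((s - (L + d) / s * (s * (rho * Y)) ^ 2 / 2) * / s) by (field; lra).
    apply Rmult_le_compat_r; lra.
  - replace (1 - (L - d) * rho ^ 2 * Y ^ 2 / 2)
      with ((s - (L - d) / s * (s * (rho * Y)) ^ 2 / 2) * / s) by (field; lra).
    apply Rmult_le_compat_r; lra.
  - replace (- ((L + d) * rho ^ 2 * Y)) with (rho * - ((L + d) / s * (s * (rho * Y))))
      by (field; lra). apply Rmult_le_compat_l; lra.
  - replace (- ((L - d) * rho ^ 2 * Y)) with (rho * - ((L - d) / s * (s * (rho * Y))))
      by (field; lra). apply Rmult_le_compat_l; lra.
  - replace ((rho * s) ^ 2 * x / s) with (rho ^ 2 * s * (x + L / s) - L * rho ^ 2)
      by (field; lra).
    assert (rho ^ 2 * s * - (d / s) <= rho ^ 2 * s * (x + L / s))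
      by (apply Rmult_le_compat_l; [nra | lra]).
    replace (rho ^ 2 * s * - (d / s)) with (- (d * rho ^ 2)) in * by (field; lra). nra.
  - replace ((rho * s) ^ 2 * x / s) with (rho ^ 2 * s * (x + L / s) - L * rho ^ 2)
      by (field; lra).
    assert (rho ^ 2 * s * (x + L / s) <= rho ^ 2 * s * (d / s))
      by (apply Rmult_le_compat_l; [nra | lra]).
    replace (rho ^ 2 * s * (d / s)) with (d * rho ^ 2) in * by (field; lra). nra.
Qed.

Lemma rescaled_parabola_error L d rho Y a0 a1 a2 : 0 <= d -> 0 <= Y <= 1 ->
  1 - (L + d) * rho ^ 2 * Y ^ 2 / 2 <= a0 <= 1 - (L - d) * rho ^ 2 * Y ^ 2 / 2 ->
  - ((L + d) * rho ^ 2 * Y) <= a1 <= - ((L - d) * rho ^ 2 * Y) ->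
  - ((L + d) * rho ^ 2) <= a2 <= - ((L - d) * rho ^ 2) ->
  Rabs (a0 - (1 - Y ^ 2)) <= d * rho ^ 2 + Rabs (L * rho ^ 2 - 2) /\
  Rabs (a1 - - (2 * Y)) <= d * rho ^ 2 + Rabs (L * rho ^ 2 - 2) /\
  Rabs (a2 - -2) <= d * rho ^ 2 + Rabs (L * rho ^ 2 - 2).
Proof.
  intros Hd HY H0 H1 H2.
  set (e := L * rho ^ 2 - 2) in *.
  assert (He : - Rabs e <= e <= Rabs e) by (split; [apply Ropp_le_cancel; rewrite Ropp_involutive, <- Rabs_Ropp |]; apply Rle_abs).
  assert (Hk : forall Z, 0 <= Z <= 1 -> Z * e <= Rabs e /\ - Rabs e <= Z * e).
  { intros Z HZ. destruct (Rle_or_lt 0 e); split; nra. }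
  assert (Hdr : 0 <= d * rho ^ 2) by (apply Rmult_le_pos; nra).
  destruct (Hk (Y ^ 2) ltac:(split; nra)) as [K1 K2].
  destruct (Hk Y ltac:(lra)) as [K3 K4].
  assert (0 <= d * rho ^ 2 * (1 - Y ^ 2)) by (apply Rmult_le_pos; nra).
  assert (0 <= d * rho ^ 2 * (1 - Y)) by (apply Rmult_le_pos; nra).
  assert (0 <= d * rho ^ 2 * Y ^ 2) by (apply Rmult_le_pos; nra).
  assert (0 <= d * rho ^ 2 * Y) by (apply Rmult_le_pos; nra).
  unfold e in *. repeat split; apply Rabs_le; split; nra.
Qed.

Lemma Derive_n_rescaled (u : R -> R) r s y j : 0 < r -> -1 < y < 1 ->
  (forall x, -r < x < r -> ex_derive u x /\ ex_derive (Derive u) x) -> (j <= 2)%nat ->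
  Derive_n (fun z => u (r * z) / s) j y = r ^ j * Derive_n u j (r * y) / s.
Proof.
  intros Hr Hy Hd Hj.
  assert (Hloc : locally (r * y) (fun x => forall k, (k <= j)%nat -> ex_derive_n u k x)).
  { apply filter_imp with (2 := locally_open_interval (-r) r (r * y) ltac:(split; nra)).
    intros x Hx k Hk. destruct (Hd x Hx) as [H1 H2].
    destruct k as [|[|[|k]]]; simpl; auto; lia. }
  unfold Rdiv.
  rewrite (Derive_n_scal_r (fun z => u (r * z)) j (/ s) y).
  rewrite (Derive_n_comp_scal u r j y Hloc). reflexivity.
Qed.

Lemma Derive_n_parabola j y : (j <= 2)%nat ->
  Derive_n (fun z => 1 - z ^ 2) j y =
  match j with O => 1 - y ^ 2 | S O => - (2 * y) | _ => -2 end.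
Proof.
  intros Hj.
  assert (D1 : forall t, Derive (fun z => 1 - z ^ 2) t = - (2 * t)).
  { intros t. apply is_derive_unique. auto_derive; auto. simpl. ring. }
  destruct j as [|[|[|j]]]; [reflexivity | | | lia].
  - simpl. apply D1.
  - change (Derive (Derive (fun z => 1 - z ^ 2)) y = -2).
    rewrite (Derive_ext _ (fun t => - (2 * t)) y D1).
    apply is_derive_unique. auto_derive; auto. ring.
Qed.

(* Pointwise C^2 closeness of u(r y)/s to 1 - y^2, using the profile of u on y >= 0 and
   that of its reflection on y < 0. *)
Lemma rescaled_C2_close (u : R -> R) s r L d c y j :
  0 < s -> 0 < r -> 0 < d ->
  (forall x, -r < x < r -> ex_derive u x /\ ex_derive (Derive u) x) ->
  ParabolicProfile u s r L d c -> ParabolicProfile (fun z => u (- z)) s r L d c ->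
  -1 < y < 1 -> r * Rabs y + d * s / c <= r -> (j <= 2)%nat ->
  Rabs (Derive_n (fun z => u (r * z) / s) j y - Derive_n (fun z => 1 - z ^ 2) j y)
    <= d * (r / s) ^ 2 + Rabs (L * (r / s) ^ 2 - 2).
Proof.
  intros Hs Hr Hd Hder HP HPrefl Hy Hry Hj.
  rewrite (Derive_n_rescaled u r s y j Hr Hy Hder Hj), (Derive_n_parabola j y Hj).
  assert (Hr1 : r ^ 1 * Derive u (r * y) / s = r / s * Derive u (r * y)) by (field; lra).
  destruct (Rle_or_lt 0 y) as [Hy0 | Hy0].
  - rewrite Rabs_pos_eq in Hry by auto.
    destruct (profile_rescaled_bounds u s r L d c y Hs Hr HP Hy0 Hry) as [N0 [N1 N2]].
    destruct (rescaled_parabola_error L d (r / s) y _ _ _ ltac:(lra) ltac:(lra) N0 N1 N2)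
      as [E0 [E1 E2]].
    destruct j as [|[|[|j]]]; [| | | lia].
    + change (Rabs (1 * u (r * y) / s - (1 - y ^ 2)) <= d * (r / s) ^ 2 + Rabs (L * (r / s) ^ 2 - 2)).
      rewrite Rmult_1_l. exact E0.
    + change (Derive_n u 1 (r * y)) with (Derive u (r * y)). rewrite Hr1. exact E1.
    + exact E2.
  - rewrite Rabs_left in Hry by auto.
    destruct (profile_rescaled_bounds _ s r L d c (- y) Hs Hr HPrefl ltac:(lra) Hry)
      as [N0 [N1 N2]].
    destruct (reflect_derivatives u r (r * - y) Hder ltac:(split; nra)) as [_ [_ [D1 D2]]].
    rewrite D1 in N1. rewrite D2 in N2.
    replace (- (r * - y)) with (r * y) in N0, N1, N2 by ring.
    destruct (rescaled_parabola_error L d (r / s) (- y) _ _ _ ltac:(lra) ltac:(lra) N0 N1 N2)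
      as [E0 [E1 E2]].
    destruct j as [|[|[|j]]]; [| | | lia].
    + change (Rabs (1 * u (r * y) / s - (1 - y ^ 2)) <= d * (r / s) ^ 2 + Rabs (L * (r / s) ^ 2 - 2)).
      rewrite Rmult_1_l. replace (1 - y ^ 2) with (1 - (- y) ^ 2) by ring. exact E0.
    + change (Derive_n u 1 (r * y)) with (Derive u (r * y)). rewrite Hr1, <- Rabs_Ropp.
      replace (- (r / s * Derive u (r * y) - - (2 * y))) with (r / s * - Derive u (r * y) - - (2 * - y))
        by ring. exact E1.
    + exact E2.
Qed.

Lemma lim_of_linear_error (x : nat -> R) (l K d0 : R) : 0 < K -> 0 < d0 ->
  (forall d, 0 < d <= d0 -> eventually (fun k => Rabs (x k - l) <= d * K)) ->
  is_lim_seq x l.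
Proof.
  intros HK Hd0 H. apply is_lim_seq_spec. intros eps.
  pose proof (cond_pos eps) as He.
  set (d := Rmin d0 (eps / (2 * K))).
  assert (Hd : 0 < d <= d0).
  { split; [apply Rmin_case; [lra | apply Rdiv_lt_0_compat; lra] | apply Rmin_l]. }
  assert (HdK : d * K < eps).
  { assert (d * K <= eps / (2 * K) * K) by (apply Rmult_le_compat_r; [lra | apply Rmin_r]).
    replace (eps / (2 * K) * K) with (eps / 2) in * by (field; lra). lra. }
  apply (filter_imp (fun k => Rabs (x k - l) <= d * K)); [intros k Hk; lra | apply H, Hd].
Qed.

Lemma admissible_errors L q1 : 0 < L -> 0 < q1 ->
  exists d0, 0 < d0 /\ d0 <= 1 / 2 /\ d0 <= L / 2 /\ (L + 1) * d0 <= q1 / 2.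
Proof.
  intros HL Hq1. set (b := q1 / (2 * (L + 1))).
  assert (Hb : 0 < b) by (apply Rdiv_lt_0_compat; lra).
  exists (Rmin (1 / 2) (Rmin (L / 2) b)).
  pose proof (Rmin_l (1 / 2) (Rmin (L / 2) b)) as H1.
  pose proof (Rmin_r (1 / 2) (Rmin (L / 2) b)) as H2.
  pose proof (Rmin_l (L / 2) b) as H3. pose proof (Rmin_r (L / 2) b) as H4.
  set (d0 := Rmin (1 / 2) (Rmin (L / 2) b)) in *.
  assert (Hd0b : d0 <= b) by lra.
  repeat split; try lra.
  - unfold d0. repeat apply Rmin_case; lra.
  - apply (Rmult_le_compat_l (L + 1)) in Hd0b; [| lra].
    replace ((L + 1) * b) with (q1 / 2) in Hd0b by (unfold b; field; lra). lra.
Qed.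

Lemma eventually_positive (s I : nat -> R) (l : R) : 0 < l -> is_lim_seq s p_infty ->
  is_lim_seq (fun k => I k / s k ^ 2) l -> eventually (fun k => 0 < s k /\ 0 < I k).
Proof.
  intros Hl Hs HM. apply is_lim_seq_spec in HM.
  apply (filter_imp (fun k => 0 < s k /\ Rabs (I k / s k ^ 2 - l) < l)).
  - intros k [Hsk Hk]. apply Rabs_def2 in Hk. assert (0 < s k ^ 2) by (apply pow_lt, Hsk).
    split; [exact Hsk |]. replace (I k) with (I k / s k ^ 2 * s k ^ 2) by (field; lra). nra.
  - apply filter_and; [apply (seq_eventually_large s Hs 0) | apply (HM (mkposreal l Hl))].
Qed.

Lemma asymptotic_formulas (s r I : nat -> R) L : 0 < L ->
  is_lim_seq s p_infty ->
  is_lim_seq (fun k => r k / s k) (radius_ratio L) ->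
  is_lim_seq (fun k => I k / s k ^ 2) (2 * radius_ratio L / 3) ->
  is_lim_seq (fun k => 2 * I k) p_infty /\
  is_lim_seq (fun k => s k ^ 4 / (9 * L / 32 * (2 * I k) ^ 2)) 1 /\
  is_lim_seq (fun k => r k ^ 4 / (9 / (8 * L) * (2 * I k) ^ 2)) 1.
Proof.
  intros HL Hs Hrho HM.
  pose proof (radius_ratio_pos L HL) as Hz. pose proof (radius_ratio_sq L HL) as Hz2.
  set (z := radius_ratio L) in *.
  set (M := fun k => I k / s k ^ 2) in *.
  assert (Hev : forall P : nat -> Prop, (forall k, 0 < s k -> 0 < I k -> P k) -> eventually P).
  { intros P HP. apply (filter_imp (fun k => 0 < s k /\ 0 < I k)); [intros k []; auto |].
    apply (eventually_positive s I (2 * z / 3)); auto; lra. }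
  assert (Hcont : forall a, 0 < a -> continuity_pt (fun x => / (a * x ^ 2)) (2 * z / 3)).
  { intros a Ha. apply continuity_pt_ex_derive. auto_derive.
    assert (0 < (2 * z / 3) ^ 2) by (apply pow_lt; lra). nra. }
  split; [| split].
  -
    apply (is_lim_seq_ext_loc (fun k => s k * s k * (2 * M k))).
    { apply Hev. intros k Hsk HIk. unfold M. field. lra. }
    apply is_lim_seq_mult with p_infty (Finite (2 * (2 * z / 3))).
    + apply is_lim_seq_mult with p_infty p_infty; auto.
      apply is_Rbar_mult_p_infty_pos. simpl. auto.
    + apply is_lim_seq_scal_l with (lu := Finite (2 * z / 3)). exact HM.
    + apply is_Rbar_mult_p_infty_pos. simpl. lra.
  - (* s_k^4 / (9 L / 32 (2 I_k)^2) = 1 / (9 L / 8 M_k^2) -> 1 / (L z^2 / 2) = 1 *)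
    apply (is_lim_seq_ext_loc (fun k => / (9 * L / 8 * M k ^ 2))).
    { apply Hev. intros k Hsk HIk. unfold M. field. lra. }
    replace 1 with ((fun x => / (9 * L / 8 * x ^ 2)) (2 * z / 3))
      by (cbv beta; replace ((2 * z / 3) ^ 2) with (4 / 9 * z ^ 2) by field;
          rewrite Hz2; field; lra).
    apply (is_lim_seq_continuous (fun x => / (9 * L / 8 * x ^ 2))); [apply Hcont; lra | exact HM].
  -
    apply (is_lim_seq_ext_loc (fun k => (r k / s k) ^ 4 * / (9 / (2 * L) * M k ^ 2))).
    { apply Hev. intros k Hsk HIk. unfold M. field. lra. }
    replace 1 with (z ^ 4 * (fun x => / (9 / (2 * L) * x ^ 2)) (2 * z / 3))
      by (cbv beta; replace ((2 * z / 3) ^ 2) with (4 / 9 * z ^ 2) by field;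
          replace (z ^ 4) with (z ^ 2 * z ^ 2) by ring; rewrite Hz2; field; lra).
    apply is_lim_seq_mult'.
    + apply (is_lim_seq_continuous (fun x => x ^ 4)); [| exact Hrho].
      apply continuity_pt_ex_derive. auto_derive. auto.
    + apply (is_lim_seq_continuous (fun x => / (9 / (2 * L) * x ^ 2))); [| exact HM].
      apply Hcont, Rdiv_lt_0_compat; lra.
Qed.

Lemma interior_margin s r z a c d y : 0 < s -> 0 < c -> 0 < z ->
  Rabs y <= a -> z / 2 <= r / s -> 0 <= d <= c * z * (1 - a) / 4 ->
  r * Rabs y + d * s / c <= r.
Proof.
  intros Hs Hc Hz Hy Hrho Hd.
  set (rho := r / s) in *.
  assert (Hr : r = rho * s) by (unfold rho; field; lra).
  assert (Hdc : d / c <= rho * (1 - a)).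
  { apply (Rmult_le_reg_r c); auto. replace (d / c * c) with d by (field; lra). nra. }
  assert (rho * Rabs y <= rho * a) by (apply Rmult_le_compat_l; lra).
  rewrite Hr. replace (d * s / c) with (d / c * s) by (field; lra). nra.
Qed.

Section RescaledLimits.

Variables (u0 : nat -> R) (u : nat -> R -> R) (rb : nat -> R) (L c d0 : R).
Hypotheses (HL : 0 < L) (Hc : 0 < c) (Hd0 : 0 < d0) (Hd0_1 : d0 <= 1 / 2) (Hd0_L : d0 <= L / 2).
Hypothesis Hs : forall k, 0 < u0 k.
Hypothesis Hprof : forall d, 0 < d <= d0 -> eventually (fun k =>
  ParabolicProfile (u k) (u0 k) (rb k) L d c /\
  ParabolicProfile (fun y => u k (- y)) (u0 k) (rb k) L d c).

Lemma support_ratio_limit : is_lim_seq (fun k => rb k / u0 k) (radius_ratio L).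
Proof.
  pose proof (radius_ratio_pos L HL).
  apply (lim_of_linear_error _ _ (1 / c + (4 / L + 2) / (L * radius_ratio L)) d0); auto.
  - assert (0 < 1 / c) by (apply Rdiv_lt_0_compat; lra).
    assert (0 < (4 / L + 2) / (L * radius_ratio L)); [|lra].
    apply Rdiv_lt_0_compat; [assert (0 < 4 / L) by (apply Rdiv_lt_0_compat; lra); lra | nra].
  - intros d Hd. generalize (Hprof d Hd). apply filter_imp. intros k [HP _].
    apply (support_ratio_close (u k)); auto; lra.
Qed.

Lemma mass_ratio_limit :
  is_lim_seq (fun k => RInt (u k) 0 (rb k) / u0 k ^ 2) (2 * radius_ratio L / 3).
Proof.
  pose proof (radius_ratio_pos L HL).
  assert (H4L : 0 < 4 / L) by (apply Rdiv_lt_0_compat; lra).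
  apply (lim_of_linear_error _ _ (((4 / L + 1) ^ 3 / 6 + 1 / c) +
    (4 / L + 2) / (L * radius_ratio L) * (1 + L * (4 / L + 1) ^ 2 / 2)) d0); auto.
  - assert (0 < 1 / c) by (apply Rdiv_lt_0_compat; lra).
    assert (0 < (4 / L + 1) ^ 3) by (apply pow_lt; lra).
    assert (0 < (4 / L + 2) / (L * radius_ratio L)) by (apply Rdiv_lt_0_compat; nra).
    assert (0 < (4 / L + 1) ^ 2) by (apply pow_lt; lra).
    assert (0 < (4 / L + 2) / (L * radius_ratio L) * (1 + L * (4 / L + 1) ^ 2 / 2))
      by (apply Rmult_lt_0_compat; nra).
    lra.
  - intros d Hd. generalize (Hprof d Hd). apply filter_imp. intros k [HP _].
    apply (mass_ratio_close (u k)); auto; lra.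
Qed.

Hypothesis Hr : forall k, 0 < rb k.
Hypothesis Hder : forall k x, - rb k < x < rb k ->
  ex_derive (u k) x /\ ex_derive (Derive (u k)) x.

(* u0_k^{-1} u_k(rb_k y) -> 1 - y^2 in C^2 uniformly on |y| <= a < 1: pick d so small that
   d (r/s)^2 < eps / 2 and the margin condition holds, then wait until |L (r/s)^2 - 2| < eps/2. *)
Lemma C2loc_convergence :
  forall a, 0 <= a < 1 -> forall j : nat, (j <= 2)%nat ->
  forall eps, 0 < eps -> exists K : nat, forall k, (K <= k)%nat ->
    forall y, Rabs y <= a ->
      Rabs (Derive_n (fun z => u k (rb k * z) / u0 k) j y
            - Derive_n (fun z => 1 - z ^ 2) j y) < eps.
Proof.
  intros a Ha j Hj eps Heps.
  pose proof support_ratio_limit as Hrho.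
  pose proof (radius_ratio_pos L HL) as Hz. pose proof (radius_ratio_sq L HL) as Hz2.
  set (z := radius_ratio L) in *.
  set (B := (z + 1) ^ 2).
  assert (HB : 0 < B) by (apply pow_lt; lra).
  set (m := c * z * (1 - a) / 4).
  assert (Hm : 0 < m) by (unfold m; apply Rdiv_lt_0_compat; [apply Rmult_lt_0_compat |]; nra).
  assert (HeB : 0 < eps / (2 * B)) by (apply Rdiv_lt_0_compat; lra).
  set (d := Rmin d0 (Rmin (eps / (2 * B)) m)).
  assert (Hd : (0 < d <= d0) /\ d <= eps / (2 * B) /\ d <= m).
  { pose proof (Rmin_l d0 (Rmin (eps / (2 * B)) m)). pose proof (Rmin_r d0 (Rmin (eps / (2 * B)) m)).
    pose proof (Rmin_l (eps / (2 * B)) m). pose proof (Rmin_r (eps / (2 * B)) m).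
    repeat split; try (unfold d; lra). unfold d. repeat apply Rmin_case; lra. }
  destruct Hd as [Hd [HdB Hdm]].
  assert (Hsq : is_lim_seq (fun k => L * (rb k / u0 k) ^ 2 - 2) 0).
  { replace 0 with (L * z ^ 2 - 2) by (rewrite Hz2; field; lra).
    apply (is_lim_seq_continuous (fun x => L * x ^ 2 - 2)); auto.
    apply continuity_pt_ex_derive. auto_derive. auto. }
  apply is_lim_seq_spec in Hsq. apply is_lim_seq_spec in Hrho.
  assert (He2 : 0 < eps / 2) by lra.
  assert (Hmin : 0 < Rmin 1 (z / 2)) by (apply Rmin_case; lra).
  destruct (filter_and _ _ (Hprof d Hd) (filter_and _ _
    (Hsq (mkposreal _ He2)) (Hrho (mkposreal _ Hmin)))) as [K HK].
  exists K. intros k Hk y Hy.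
  destruct (HK k Hk) as [[HP HPrefl] [Herr Hclose]]. cbn [pos] in Herr, Hclose.
  rewrite Rminus_0_r in Herr.
  pose proof (Rmin_l 1 (z / 2)). pose proof (Rmin_r 1 (z / 2)).
  apply Rabs_def2 in Hclose.
  assert (Hy1 : -1 < y < 1) by (apply Rabs_le_between in Hy; lra).
  assert (Hmargin : rb k * Rabs y + d * u0 k / c <= rb k)
    by (apply (interior_margin _ _ z a); auto; unfold m in Hdm; lra).
  pose proof (rescaled_C2_close (u k) (u0 k) (rb k) L d c y j (Hs k) (Hr k) (proj1 Hd)
    (Hder k) HP HPrefl Hy1 Hmargin Hj) as Hfin.
  assert (d * (rb k / u0 k) ^ 2 <= eps / 2).
  { assert ((rb k / u0 k) ^ 2 <= B) by (unfold B; apply pow_incr; lra).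
    apply Rle_trans with (d * B); [apply Rmult_le_compat_l; lra |].
    assert (d * B <= eps / (2 * B) * B) by (apply Rmult_le_compat_r; lra).
    replace (eps / (2 * B) * B) with (eps / 2) in * by (field; lra). lra. }
  lra.
Qed.

End RescaledLimits.

Theorem mainTheorem12
  (Q : R -> R) (A m S : R)
  (HEL : H_EL Q A m) (HR : H_R Q) (Hestar : estar_infinite Q)
  (HS : 0 < - S)
  (HQinf : is_lim Q p_infty (- S))
  (HQ'inf : is_lim (fun s => s * Derive Q s) p_infty 0)
  (u0 : nat -> R) (HA : forall k, setA Q (u0 k))
  (Hu0 : is_lim_seq u0 p_infty)
  (u : nat -> R -> R) (rb : nat -> R)
  (Hu : forall k, is_sol_P Q (u0 k) (u k) (rb k)) :
  is_lim_seq (fun k => mass (u k) (rb k)) p_infty /\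
  is_lim_seq (fun k => u0 k ^ 4 / (9 * Rabs S / 32 * mass (u k) (rb k) ^ 2)) 1 /\
  is_lim_seq (fun k => rb k ^ 4 / (9 / (8 * Rabs S) * mass (u k) (rb k) ^ 2)) 1 /\
  (forall a, 0 <= a < 1 -> forall j : nat, (j <= 2)%nat ->
     forall eps, 0 < eps -> exists K : nat, forall k, (K <= k)%nat ->
       forall y, Rabs y <= a ->
         Rabs (Derive_n (fun z => u k (rb k * z) / u0 k) j y
               - Derive_n (fun z => 1 - z ^ 2) j y) < eps).
Proof.
  replace (Rabs S) with (- S) by (rewrite Rabs_left; lra).
  set (L := - S) in *.
  assert (HQd : forall x, 0 < x -> ex_derive Q x) by (intros x Hx; apply (proj1 HEL x Hx)).
  assert (Hs : forall k, 0 < u0 k) by (intros k; apply (HA k)).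
  destruct (Q_lower_bound Q A m L u0 HEL HS HQinf HA Hu0) as [q1 [Hq1 Hq1b]].
  destruct (admissible_errors L q1 HS Hq1) as [d0 [Hd0 [Hd0_1 [Hd0_L Hd0q]]]].
  assert (Hc : 0 < sqrt q1) by (apply sqrt_lt_R0, Hq1).
  assert (Hprof : forall d, 0 < d <= d0 -> eventually (fun k =>
    ParabolicProfile (u k) (u0 k) (rb k) L d (sqrt q1) /\
    ParabolicProfile (fun y => u k (- y)) (u0 k) (rb k) L d (sqrt q1))).
  { intros d Hd. apply (eventually_profile Q L q1); auto; [lra |].
    apply Rle_trans with ((L + 1) * d0); [apply Rmult_le_compat_l |]; lra. }
  assert (Hrho : is_lim_seq (fun k => rb k / u0 k) (radius_ratio L))
    by (apply (support_ratio_limit u0 u rb L (sqrt q1) d0); auto).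
  assert (HM : is_lim_seq (fun k => RInt (u k) 0 (rb k) / u0 k ^ 2) (2 * radius_ratio L / 3))
    by (apply (mass_ratio_limit u0 u rb L (sqrt q1) d0); auto).
  destruct (asymptotic_formulas u0 rb (fun k => RInt (u k) 0 (rb k)) L HS Hu0 Hrho HM)
    as [Hmass [Hheight Hradius]].
  split; [exact Hmass | split; [exact Hheight | split; [exact Hradius |]]].
  apply (C2loc_convergence u0 u rb L (sqrt q1) d0); auto.
  - intros k. apply (Hu k).
  - intros k x Hx. destruct (sol_ode _ _ _ _ (Hu k) x Hx) as [_ [? [? _]]]. auto.
Qed.
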